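(* Let $(\mu^{(n)},\nu^{(n)})_{n\in\mathbb N}$ be a sequence in $\mathcal M_{\mathrm{tem}}(\mathbb R)^2$ (or in $\mathcal M_{\mathrm{rap}}(\mathbb R)^2$) converging to $(\mu,\nu)$, and assume $R(\mu^{(n)})\le L(\nu^{(n)})$ for all $n$. Then $$R(\mu)\le\liminf_{n\to\infty}R(\mu^{(n)})\le\limsup_{n\to\infty}L(\nu^{(n)})\le L(\nu).$$
   Context: $\phi_\lambda(x)=e^{-\lambda|x|}$. $\mathcal M_{\mathrm{tem}}(\mathbb R)$: nonnegative Radon measures with $\int\phi_\lambda d\mu<\infty$ for all $\lambda>0$, with $\mu_n\to\mu$ iff $\int\varphi d\mu_n\to\int\varphi d\mu$ for every continuous $\varphi$ such that, for some $\lambda>0$, $\sup|\varphi|/\phi_\lambda<\infty$ and $\varphi/\phi_\lambda$ has finite limits at $\pm\infty$. $\mathcal M_{\mathrm{rap}}(\mathbb R)$: those with $\int\phi_{-\lambda}d\mu<\infty$ for all $\lambda>0$, with $\mu_n\to\mu$ iff weak convergence as finite measures and $\sup_n\int\phi_{-\lambda}d\mu_n<\infty$ for all $\lambda>0$. ${\rm supp}(\mu)=\{x:\mu(B_\varepsilon(x))>0\ \forall\varepsilon>0\}$, $R(\mu)=\sup{\rm supp}(\mu)$, $L(\mu)=\inf{\rm supp}(\mu)$ in $\bar{\mathbb R}$ (with $\sup\emptyset=-\infty$, $\inf\emptyset=+\infty$). *)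

From HB Require Import structures.
From mathcomp Require Import all_boot all_order all_algebra.
From mathcomp Require Import all_classical all_reals all_analysis.
Set Implicit Arguments. Unset Strict Implicit. Unset Printing Implicit Defensive.
Import Order.TTheory GRing.Theory Num.Theory.
Import numFieldNormedType.Exports.
Local Open Scope classical_set_scope.
Local Open Scope ring_scope.
Local Open Scope ereal_scope.

Section Defs.
Variable R : realType.

(* Nonnegative Borel measures on R (Borel sigma-algebra = the canonical one). *)
Notation meas := {measure set R -> \bar R}.

Definition phi (lam x : R) : R := expR (- (lam * `|x|)).

(* Radon = locally finite: finite on every compact interval. *)
Definition radon (mu : meas) : Prop :=
  forall a b : R, mu `[a, b]%classic < +oo.

Definition Mtem (mu : meas) : Prop :=
  radon mu /\ forall lam : R, (0 < lam)%R -> \int[mu]_x (phi lam x)%:E < +oo.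

Definition Mrap (mu : meas) : Prop :=
  radon mu /\ forall lam : R, (0 < lam)%R -> \int[mu]_x (phi (- lam) x)%:E < +oo.

Definition tem_test (f : R -> R) : Prop :=
  continuous f /\
  exists2 lam : R, (0 < lam)%R &
    [/\ (exists C : R, forall x, `|f x| <= C * phi lam x)%R,
        (exists l : R, (fun x => (f x / phi lam x)%R) x @[x --> +oo%R] --> l) &
        (exists l : R, (fun x => (f x / phi lam x)%R) x @[x --> -oo%R] --> l)].

Definition tem_cvg (mun : nat -> meas) (mu : meas) : Prop :=
  forall f, tem_test f ->
    (fun n => \int[mun n]_x (f x)%:E) @ \oo --> \int[mu]_x (f x)%:E.

Definition rap_cvg (mun : nat -> meas) (mu : meas) : Prop :=
  (forall f : R -> R, continuous f -> (exists C : R, forall x, `|f x| <= C)%R ->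
    (fun n => \int[mun n]_x (f x)%:E) @ \oo --> \int[mu]_x (f x)%:E) /\
  (forall lam : R, (0 < lam)%R ->
    exists C : R, forall n, \int[mun n]_x (phi (- lam) x)%:E <= C%:E).

Definition supp (mu : meas) : set R :=
  [set x | forall e : R, (0 < e)%R -> 0 < mu (ball x e)].

(* R(mu) = sup supp(mu), L(mu) = inf supp(mu) in the extended reals,
   with sup set0 = -oo and inf set0 = +oo. *)
Definition Rsupp (mu : meas) : \bar R := ereal_sup [set x%:E | x in supp mu].
Definition Lsupp (mu : meas) : \bar R := ereal_inf [set x%:E | x in supp mu].

End Defs.

(** If x lies in the support of mu, the integral of a continuous tent
    supported in the e-ball around x is positive; by convergence it is
    eventually positive for mu_n, so mu_n charges that ball and, by
    compactness, supp mu_n meets the closed e-ball around x.  Hence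
    R(mu_n) >= x - e and, symmetrically, L(nu_n) <= x + e for large n.  The
    tent is both a tempered and a bounded test function, so both modes of
    convergence apply. *)
From HB Require Import structures.
From mathcomp Require Import all_boot all_order all_algebra.
From mathcomp Require Import all_classical all_reals all_analysis.
From mathcomp Require Import measurable_realfun lra.
Import Order.TTheory GRing.Theory Num.Theory.
Import numFieldNormedType.Exports.
Local Open Scope classical_set_scope.
Local Open Scope ring_scope.
Local Open Scope ereal_scope.

Section limn_einf_esup.
Context {R : realType}.
Implicit Types u v : (\bar R)^nat.

Lemma limn_einf_ge_near u a : (\forall n \near \oo, a <= u n) ->
  a <= limn_einf u.
Proof.
case=> N _ hN; rewrite limn_einf_lim; apply: lime_ge; first exact: is_cvg_einfs.
exists N => // n /= Nn; apply: le_ereal_inf_tmp => _ [m /= nm <-].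
by apply: hN; rewrite /= (leq_trans Nn nm).
Qed.

Lemma limn_esup_le_near u a : (\forall n \near \oo, u n <= a) ->
  limn_esup u <= a.
Proof.
case=> N _ hN; rewrite limn_esup_lim; apply: lime_le; first exact: is_cvg_esups.
exists N => // n /= Nn; apply: ge_ereal_sup => _ [m /= nm <-].
by apply: hN; rewrite /= (leq_trans Nn nm).
Qed.

Lemma le_limn_einf u v : (forall n, u n <= v n) -> limn_einf u <= limn_einf v.
Proof.
move=> uv; rewrite !limn_einf_lim; apply: lee_lim; try exact: is_cvg_einfs.
apply: nearW => n; apply: le_ereal_inf_tmp => _ [m /= nm <-].
by apply: le_trans (uv m); apply: ereal_inf_lbound; exists m.
Qed.

End limn_einf_esup.

Section support.
Context {R : realType}.
Implicit Types nu : {measure set R -> \bar R}.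

Lemma compact_negligible_locally nu (K : set R) : compact K ->
  (forall y, K y -> exists2 d : R, (0 < d)%R & nu (ball y d) = 0) ->
  nu.-negligible K.
Proof.
move=> cK loc.
have /choice[d dP] : forall y, exists d : R, K y -> (0 < d)%R /\ nu (ball y d) = 0.
  move=> y; have [Ky|nKy] := pselect (K y); last by exists 1%R => /nKy.
  by have [d d_gt0 nu0] := loc y Ky; exists d.
move: cK; rewrite compact_cover => /(_ R K (fun y => ball y (d y))) [].
- by move=> y /dP[d_gt0 _]; exact: ball_open.
- by move=> y Ky; exists y => //; apply: ballxx; case: (dP y Ky).
move=> D DK KD; apply: (negligibleS KD).
rewrite /cover bigcup_fset big_seq; elim/big_ind: _.
- exact: negligible_set0.
- by move=> A B; apply: negligibleU.
- move=> y yD; apply/negligibleP; first exact: measurable_ball.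
  by have /[!inE] /dP[] := DK _ yD.
Qed.

Lemma supp_meets_ball nu (x e : R) : 0 < nu (ball x e) ->
  exists2 y, supp nu y & (`|x - y| <= e)%R.
Proof.
move=> nu_gt0; have [e_le0|e_gt0] := lerP e 0%R.
  by move: nu_gt0; rewrite (ball0 _ _).2 // measure0 ltxx.
apply: contrapT => no_supp.
have K_null : nu.-negligible `[(x - e)%R, (x + e)%R]%classic.
  apply: compact_negligible_locally; first exact: segment_compact.
  move=> y /=; rewrite in_itv /= => /andP[xey yxe].
  have /existsNP[d /not_implyP[d_gt0 /negP]] : ~ supp nu y.
    by move=> sy; apply: no_supp; exists y => //; rewrite ler_norml; lra.
  rewrite -leNgt => nu_le0; exists d => //.
  by apply/eqP; rewrite eq_le nu_le0 measure_ge0.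
have ball_sub : ball x e `<=` `[(x - e)%R, (x + e)%R]%classic.
  by rewrite ball_itv; apply: subset_itv; rewrite bnd_simp.
have /negligibleP := negligibleS ball_sub K_null.
by move=> /(_ (measurable_ball _ _)) nu0; move: nu_gt0; rewrite nu0 ltxx.
Qed.

End support.

Section tent.
Context {R : realType}.
Variables (x e : R).
Hypothesis e_gt0 : (0 < e)%R.
Local Open Scope ring_scope.

Definition tent (y : R) : R := Num.max 0 (1 - `|y - x| / e).

Lemma tent_ge0 y : 0 <= tent y.
Proof. by rewrite /tent le_max lexx. Qed.

Lemma tent_le1 y : tent y <= 1.
Proof. by rewrite /tent ge_max ler01 lerBlDr lerDl divr_ge0 // ltW. Qed.

Lemma tent_eq0 y : e <= `|y - x| -> tent y = 0.
Proof. by move=> exy; apply/max_idPl; rewrite subr_le0 ler_pdivlMr // mul1r. Qed.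

Lemma tent_ge_half y : `|y - x| < e / 2 -> 1 / 2 <= tent y.
Proof.
move=> yx; rewrite /tent le_max; apply/orP; right.
suff : `|y - x| / e <= 1 / 2 by lra.
by rewrite ler_pdivrMr //; apply: ltW; lra.
Qed.

Lemma continuous_tent : continuous tent.
Proof.
have -> : tent = (fun=> 0 : R^o) \max (fun y => 1 - `|y - x| / e : R^o) by [].
move=> y; apply: continuous_max; first exact: cvg_cst.
apply: cvgB; first exact: cvg_cst.
apply: cvgM; last exact: cvg_cst.
by apply: cvg_norm; apply: cvgB; [exact: cvg_id|exact: cvg_cst].
Qed.

Lemma tem_test_tent : tem_test tent.
Proof.
split; first exact: continuous_tent.
exists 1 => //; split.
- exists (expR (`|x| + e)) => y; rewrite /phi mul1r ger0_norm ?tent_ge0 //.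
  have [yx_lt|yx_ge] := ltP `|y - x| e; last by rewrite tent_eq0 // mulr_ge0 ?expR_ge0.
  apply: le_trans (tent_le1 y) _; rewrite -expRD.
  have := ler_normD x (y - x); rewrite addrC subrK => y_le.
  have := expR_ge1Dx (`|x| + e - `|y|); lra.
- exists 0; apply: cvg_near_cst; near=> y.
  rewrite tent_eq0 ?mul0r //.
  have := ler_norm (y - x); have := ler_norm x.
  have : `|x| + e < y by near: y; apply: nbhs_pinfty_gt; exact: num_real.
  lra.
- exists 0; apply: cvg_near_cst; near=> y.
  rewrite tent_eq0 ?mul0r // distrC.
  have := ler_norm (x - y); have := ler_norm (- x); rewrite normrN.
  have : y < - (`|x| + e) by near: y; apply: nbhs_ninfty_lt; exact: num_real.
  lra.
Unshelve. all: by end_near.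
Qed.

Lemma bounded_tent : exists C : R, forall y, `|tent y| <= C.
Proof. by exists 1 => y; rewrite ger0_norm ?tent_ge0 // tent_le1. Qed.

Lemma measurable_tent (D : set R) : measurable_fun D (EFin \o tent).
Proof.
apply: measurable_funTS; apply/measurable_EFinP.
exact: continuous_measurable_fun continuous_tent.
Qed.

End tent.

Section tent_integral.
Context {R : realType}.
Implicit Types (nu : {measure set R -> \bar R}) (mun : nat -> {measure set R -> \bar R}).

Lemma integral_tent_gt0 {nu} {x e : R} : (0 < e)%R -> supp nu x ->
  0 < \int[nu]_y (tent x e y)%:E.
Proof.
move=> e_gt0 sx; have e2_gt0 : (0 < e / 2)%R by rewrite divr_gt0.
have half_le : \int[nu]_(y in ball x (e / 2)) (cst (1 / 2)%:E) y <=
               \int[nu]_(y in ball x (e / 2)) (tent x e y)%:E.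
  apply: ge0_le_integral => //; first exact: measurable_ball.
  - by move=> y _; rewrite /= lee_fin divr_ge0.
  - exact: measurable_tent.
  - move=> y; rewrite -ball_normE /= lee_fin distrC; exact: tent_ge_half.
have ball_le : \int[nu]_(y in ball x (e / 2)) (tent x e y)%:E <=
               \int[nu]_y (tent x e y)%:E.
  apply: ge0_subset_integral => //; first exact: measurable_ball.
  - exact: measurable_tent.
  - by move=> y _; rewrite lee_fin tent_ge0.
rewrite integral_cst in half_le; last exact: measurable_ball.
apply: lt_le_trans (le_trans half_le ball_le).
by rewrite mule_gt0 ?sx // lte_fin divr_gt0.
Qed.

Lemma measure_ball_gt0 {nu} {x e : R} : (0 < e)%R ->
  0 < \int[nu]_y (tent x e y)%:E -> 0 < nu (ball x e).
Proof.
move=> e_gt0; apply: contraPP => /negP; rewrite -leNgt => ball_le0.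
have nu0 : nu (ball x e) = 0 by apply/eqP; rewrite eq_le ball_le0 measure_ge0.
apply/negP; rewrite -leNgt.
have := integral_indic nu measurableT (measurable_ball x e).
rewrite setIT nu0 => <-.
apply: ge0_le_integral => //.
- by move=> y _; rewrite lee_fin tent_ge0.
- exact: measurable_tent.
- by apply/measurable_EFinP; exact: measurable_indic (measurable_ball _ _).
move=> y _; rewrite lee_fin indicE.
have [xy|xy] := pselect (ball x e y); first by rewrite mem_set // tent_le1.
rewrite memNset // tent_eq0 // leNgt distrC; apply/negP => xy_lt.
by apply: xy; rewrite -ball_normE.
Qed.

Definition tent_cvg mun (mu : {measure set R -> \bar R}) :=
  forall (x e : R), (0 < e)%R ->
    (fun n => \int[mun n]_y (tent x e y)%:E) @ \oo --> \int[mu]_y (tent x e y)%:E.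

Lemma tem_cvg_tent mun mu : tem_cvg mun mu -> tent_cvg mun mu.
Proof. by move=> cvg_mu x e e_gt0; apply: cvg_mu; exact: tem_test_tent. Qed.

Lemma rap_cvg_tent mun mu : rap_cvg mun mu -> tent_cvg mun mu.
Proof.
move=> [cvg_mu _] x e e_gt0.
by apply: cvg_mu; [exact: continuous_tent|exact: bounded_tent].
Qed.

Lemma supp_near_cvg {mun mu} {x e : R} : tent_cvg mun mu -> supp mu x ->
  (0 < e)%R -> \forall n \near \oo, exists2 y, supp (mun n) y & (`|x - y| <= e)%R.
Proof.
move=> cvg_mu sx e_gt0.
have int_gt0 : \forall n \near \oo, 0 < \int[mun n]_y (tent x e y)%:E.
  exact: cvg_mu x e e_gt0 _ (open_ereal_gt' (integral_tent_gt0 e_gt0 sx)).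
near=> n; apply: supp_meets_ball; apply: measure_ball_gt0 e_gt0 _.
by near: n.
Unshelve. all: by end_near.
Qed.

Lemma Rsupp_le_limn_einf mun mu : tent_cvg mun mu ->
  Rsupp mu <= limn_einf (fun n => Rsupp (mun n)).
Proof.
move=> cvg_mu; apply: ge_ereal_sup => _ [x sx <-].
apply/lee_subgt0Pr => e e_gt0; apply: limn_einf_ge_near.
near=> n; have [y sy xy] : exists2 y, supp (mun n) y & (`|x - y| <= e)%R.
  by near: n; exact: supp_near_cvg cvg_mu sx e_gt0.
apply: (@le_trans _ _ y%:E); last by apply: ereal_sup_ubound; exists y.
by rewrite -EFinB lee_fin; have := ler_norm (x - y); lra.
Unshelve. all: by end_near.
Qed.

Lemma limn_esup_le_Lsupp nun nu : tent_cvg nun nu ->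
  limn_esup (fun n => Lsupp (nun n)) <= Lsupp nu.
Proof.
move=> cvg_nu; apply: le_ereal_inf_tmp => _ [x sx <-].
apply/lee_addgt0Pr => e e_gt0; apply: limn_esup_le_near.
near=> n; have [y sy xy] : exists2 y, supp (nun n) y & (`|x - y| <= e)%R.
  by near: n; exact: supp_near_cvg cvg_nu sx e_gt0.
apply: (@le_trans _ _ y%:E); first by apply: ereal_inf_lbound; exists y.
by rewrite -EFinD lee_fin; have := ler_norm (y - x); rewrite distrC; lra.
Unshelve. all: by end_near.
Qed.

End tent_integral.

Theorem corollary5p2 (R : realType)
    (mun nun : nat -> {measure set R -> \bar R})
    (mu nu : {measure set R -> \bar R}) :
  ((forall n, Mtem (mun n) /\ Mtem (nun n)) /\ Mtem mu /\ Mtem nu /\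
     tem_cvg mun mu /\ tem_cvg nun nu) \/
  ((forall n, Mrap (mun n) /\ Mrap (nun n)) /\ Mrap mu /\ Mrap nu /\
     rap_cvg mun mu /\ rap_cvg nun nu) ->
  (forall n, Rsupp (mun n) <= Lsupp (nun n)) ->
  [/\ Rsupp mu <= limn_einf (fun n => Rsupp (mun n)),
      limn_einf (fun n => Rsupp (mun n)) <= limn_esup (fun n => Lsupp (nun n)) &
      limn_esup (fun n => Lsupp (nun n)) <= Lsupp nu].
Proof.
move=> conv RL.
have [cvg_mu cvg_nu] : tent_cvg mun mu /\ tent_cvg nun nu.
  case: conv => [[_ [_ [_ [? ?]]]]|[_ [_ [_ [? ?]]]]].
  - by split; exact: tem_cvg_tent.
  - by split; exact: rap_cvg_tent.
split.
- exact: Rsupp_le_limn_einf.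
- by apply: le_trans (limn_einf_sup _); exact: le_limn_einf.
- exact: limn_esup_le_Lsupp.
Qed.
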